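(* The automorphic growth of the Heisenberg group $H(\mathbb{Z})=\langle a,b,c\mid c=[a,b],\ c\text{ is central}\rangle$ is quadratic, i.e. $\alpha_{H(\mathbb{Z})}\sim(n\mapsto n^2)$.
   Context: For a finitely generated group $G$ with finite generating set $\Sigma$, the automorphic growth function sends $n$ to the number of $\operatorname{Aut}(G)$-orbits of $G$ containing an element of word length at most $n$ with respect to $\Sigma$. For non-decreasing non-zero $f,g\colon\mathbb{N}\to\mathbb{N}$ write $f\preccurlyeq g$ if there is $\lambda\in\mathbb{N}\setminus\{0\}$ with $f(n)\le\lambda g(\lambda n+\lambda)+\lambda$ for all $n$, and $f\sim g$ if both hold in each direction; $\alpha_G$ is the $\sim$-class of the automorphic growth function, which is independent of $\Sigma$. *)

From Stdlib Require Import ZArith List Lia.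
Import ListNotations.
Open Scope Z_scope.

Definition Heis : Type := (Z * Z * Z)%type.

Definition hmul (g h : Heis) : Heis :=
  let '(x, y, z) := g in let '(x', y', z') := h in
  (x + x', y + y', z + z' + x * y').

Definition hone : Heis := (0, 0, 0).

Definition hinv (g : Heis) : Heis :=
  let '(x, y, z) := g in (- x, - y, - z + x * y).

Definition ha : Heis := (1, 0, 0).
Definition hb : Heis := (0, 1, 0).
Definition hc : Heis := hmul (hmul (hinv ha) (hinv hb)) (hmul ha hb).

Definition gens : list Heis :=
  [ha; hinv ha; hb; hinv hb; hc; hinv hc].

Definition eval_word (w : list Heis) : Heis := fold_right hmul hone w.

Definition in_ball (n : nat) (g : Heis) : Prop :=
  exists w : list Heis, (length w <= n)%nat /\
    (forall s, In s w -> In s gens) /\ eval_word w = g.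

Definition is_aut (f : Heis -> Heis) : Prop :=
  (forall g h, f (hmul g h) = hmul (f g) (f h)) /\
  exists f' : Heis -> Heis, (forall g, f' (f g) = g) /\ (forall g, f (f' g) = g).

Definition aut_equiv (g h : Heis) : Prop :=
  exists f, is_aut f /\ f g = h.

(** [orbit_count n k]: exactly k Aut(H)-orbits contain an element of
    word length <= n (k representatives, pairwise in distinct orbits,
    covering all orbits meeting the ball). *)
Definition orbit_count (n k : nat) : Prop :=
  exists reps : list Heis,
    length reps = k /\
    (forall r, In r reps -> in_ball n r) /\
    NoDup reps /\
    (forall i j, (i < k)%nat -> (j < k)%nat -> i <> j ->
       ~ aut_equiv (nth i reps hone) (nth j reps hone)) /\
    (forall g, in_ball n g -> exists r, In r reps /\ aut_equiv g r).

Definition is_automorphic_growth (f : nat -> nat) : Prop :=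
  forall n, orbit_count n (f n).

Definition gdom (f g : nat -> nat) : Prop :=
  exists lam : nat, (0 < lam)%nat /\
    forall n, (f n <= lam * g (lam * n + lam) + lam)%nat.

Definition gequiv (f g : nat -> nat) : Prop := gdom f g /\ gdom g f.

From Stdlib Require Import ZArith List Lia Classical ClassicalEpsilon.
Import ListNotations.
Open Scope Z_scope.

(* An automorphism of H(Z) preserves the centre {(0,0,t)} = <c> and acts on it by t |-> +-t,
   so central elements c^m with distinct |m| lie in distinct orbits; since c^(K^2) has word
   length O(K), the ball of radius 5K meets more than K^2 orbits.  Conversely, lifts of
   SL2(Z) and central shears move a non-central (x,y,z) to (d,0,r) with d = gcd(x,y) and
   0 <= r < d, while the n-ball consists of elements with |x|+|y| <= n and |z| <= n^2; hence
   the 3n^2+1 elements (0,0,z) with |z| <= n^2 and (d,0,r) with 1 <= d <= n, 0 <= r < n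
   represent every orbit meeting the n-ball. *)

Lemma heis_eq x y z x' y' z' :
  (x, y, z) = (x', y', z') :> Heis <-> x = x' /\ y = y' /\ z = z'.
Proof.
  split; [intro H; now injection H as -> -> ->|now intros (-> & -> & ->)].
Qed.

Lemma hmul_eq x y z x' y' z' :
  hmul (x, y, z) (x', y', z') = (x + x', y + y', z + z' + x * y').
Proof. reflexivity. Qed.

Ltac split_heis := apply heis_eq; split; [|split].

Lemma hmul_assoc g h k : hmul g (hmul h k) = hmul (hmul g h) k.
Proof.
  destruct g as [[x y] z], h as [[x' y'] z'], k as [[x'' y''] z'']; cbn.
  split_heis; ring.
Qed.

Lemma hmul_1l g : hmul hone g = g.
Proof. destruct g as [[x y] z]; cbn; split_heis; ring. Qed.

Lemma hmul_idem g : hmul g g = g -> g = hone.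
Proof.
  destruct g as [[x y] z]; cbn; rewrite !heis_eq.
  intros (Hx & Hy & Hz); split_heis; nia.
Qed.

Lemma central_comm t g : hmul (0, 0, t) g = hmul g (0, 0, t).
Proof. destruct g as [[x y] z]; cbn; split_heis; ring. Qed.

Lemma central_elements e : (forall h, hmul e h = hmul h e) -> exists t, e = (0, 0, t).
Proof.
  destruct e as [[x y] z]; intro He.
  pose proof (He (1, 0, 0)) as Ha; pose proof (He (0, 1, 0)) as Hb; rewrite !hmul_eq in Ha, Hb.
  apply heis_eq in Ha, Hb.
  exists z; split_heis; lia.
Qed.

Lemma gens_eq : gens = [(1, 0, 0); (-1, 0, 0); (0, 1, 0); (0, -1, 0); (0, 0, 1); (0, 0, -1)].
Proof. reflexivity. Qed.

Lemma eval_word_cons s w : eval_word (s :: w) = hmul s (eval_word w).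
Proof. reflexivity. Qed.

Lemma eval_word_app w1 w2 : eval_word (w1 ++ w2) = hmul (eval_word w1) (eval_word w2).
Proof.
  induction w1 as [|s w1 IH]; cbn [app].
  - now rewrite hmul_1l.
  - now rewrite !eval_word_cons, IH, hmul_assoc.
Qed.

Lemma eval_word_repeat x y z k : x * y = 0 ->
  eval_word (repeat (x, y, z) k) = (Z.of_nat k * x, Z.of_nat k * y, Z.of_nat k * z).
Proof.
  intro Hxy; induction k as [|k IH]; [reflexivity|].
  cbn [repeat]; rewrite eval_word_cons, IH, Nat2Z.inj_succ; cbn.
  split_heis; nia.
Qed.

Lemma eval_word_bound w x y z : (forall s, In s w -> In s gens) ->
  eval_word w = (x, y, z) ->
  Z.abs x + Z.abs y <= Z.of_nat (length w) /\
  Z.abs z <= Z.of_nat (length w) * Z.of_nat (length w).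
Proof.
  revert x y z; induction w as [|s w IH]; intros x y z Hw Hxyz.
  - apply heis_eq in Hxyz as (<- & <- & <-); cbn; lia.
  - rewrite eval_word_cons in Hxyz.
    destruct (eval_word w) as [[x0 y0] z0] eqn:Hw0.
    destruct (IH x0 y0 z0 (fun t Ht => Hw t (or_intror Ht)) eq_refl) as [Bxy Bz].
    cbn [length]; rewrite Nat2Z.inj_succ.
    assert (Hs := Hw s (or_introl eq_refl)); rewrite gens_eq in Hs.
    repeat destruct Hs as [<-|Hs]; try contradiction;
      rewrite hmul_eq in Hxyz; apply heis_eq in Hxyz as (<- & <- & <-); split; lia.
Qed.

Lemma in_ball_bound n x y z : in_ball n (x, y, z) ->
  Z.abs x + Z.abs y <= Z.of_nat n /\ Z.abs z <= Z.of_nat n * Z.of_nat n.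
Proof.
  intros [w [Hlen [Hw Hxyz]]].
  destruct (eval_word_bound w x y z Hw Hxyz); split; nia.
Qed.

(* c^i = a^K b^q a^-K b^-q c^r with i = K q + r, a word of length 2K + 2q + r <= 5K. *)
Lemma in_ball_central (K i : nat) : (i <= K * K)%nat -> in_ball (5 * K) (0, 0, Z.of_nat i).
Proof.
  intro Hi; destruct (Nat.eq_dec K 0) as [->|HK].
  { replace i with 0%nat by lia; exists []; cbn; repeat split; [lia|easy]. }
  pose proof (Nat.div_mod_eq i K) as Hdiv; pose proof (Nat.mod_upper_bound i K HK) as Hr.
  set (q := (i / K)%nat) in *; set (r := (i mod K)%nat) in *.
  assert (Hq : (q <= K)%nat) by nia.
  exists (repeat (1, 0, 0) K ++ repeat (0, 1, 0) q ++ repeat (-1, 0, 0) K ++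
          repeat (0, -1, 0) q ++ repeat (0, 0, 1) r).
  repeat split.
  - rewrite !length_app, !repeat_length; lia.
  - intros s Hs; repeat apply in_app_or in Hs as [Hs|Hs];
      apply repeat_spec in Hs; subst s; rewrite gens_eq; cbn; tauto.
  - rewrite !eval_word_app, !eval_word_repeat, !hmul_eq by lia; split_heis; nia.
Qed.

Lemma is_aut_id : is_aut (fun g => g).
Proof. split; [easy|]. now exists (fun g => g). Qed.

Lemma is_aut_comp f1 f2 : is_aut f1 -> is_aut f2 -> is_aut (fun g => f2 (f1 g)).
Proof.
  intros [Hom1 [f1' [L1 R1]]] [Hom2 [f2' [L2 R2]]]; split.
  - intros g h; now rewrite Hom1, Hom2.
  - exists (fun g => f1' (f2' g)); split; intro g; [now rewrite L2, L1|now rewrite R1, R2].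
Qed.

Lemma is_aut_inverse f : is_aut f -> exists f', is_aut f' /\ forall g, f' (f g) = g.
Proof.
  intros [Hom [f' [L R]]]; exists f'; repeat split; [|now exists f|exact L].
  intros g h; rewrite <- (R g), <- (R h), <- Hom, !L; reflexivity.
Qed.

Lemma aut_equiv_refl g : aut_equiv g g.
Proof. exists (fun g => g); split; [apply is_aut_id|reflexivity]. Qed.

Lemma aut_equiv_sym g h : aut_equiv g h -> aut_equiv h g.
Proof.
  intros [f [Hf <-]]; destruct (is_aut_inverse f Hf) as [f' [Hf' L]].
  now exists f'.
Qed.

Lemma aut_equiv_trans g h k : aut_equiv g h -> aut_equiv h k -> aut_equiv g k.
Proof.
  intros [f1 [Hf1 <-]] [f2 [Hf2 <-]].
  exists (fun g => f2 (f1 g)); split; [now apply is_aut_comp|reflexivity].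
Qed.

Lemma aut_hone f : is_aut f -> f hone = hone.
Proof. intros [Hom _]; apply hmul_idem; rewrite <- Hom; reflexivity. Qed.

Lemma aut_central_generator f : is_aut f -> exists d, f (0, 0, 1) = (0, 0, d).
Proof.
  intros [Hom [f' [_ R]]]; apply central_elements; intro h.
  rewrite <- (R h), <- !Hom, central_comm; reflexivity.
Qed.

Lemma aut_on_center f d : is_aut f -> f (0, 0, 1) = (0, 0, d) ->
  forall t, f (0, 0, t) = (0, 0, t * d).
Proof.
  intros Hf Hd; pose proof Hf as [Hom _].
  induction t as [|t IH|t IH] using Z.peano_ind.
  - exact (aut_hone f Hf).
  - replace (0, 0, Z.succ t) with (hmul (0, 0, t) (0, 0, 1)) by (rewrite hmul_eq; split_heis; lia).
    rewrite Hom, IH, Hd, hmul_eq; split_heis; lia.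
  - assert (Ht : f (0, 0, t) = hmul (f (0, 0, Z.pred t)) (0, 0, d)).
    { rewrite <- Hd, <- Hom, hmul_eq; f_equal; split_heis; lia. }
    rewrite IH in Ht; destruct (f (0, 0, Z.pred t)) as [[x y] z].
    rewrite hmul_eq in Ht; apply heis_eq in Ht as (Hx & Hy & Hz).
    split_heis; lia.
Qed.

Lemma aut_center f : is_aut f ->
  exists d, (d = 1 \/ d = -1) /\ forall t, f (0, 0, t) = (0, 0, t * d).
Proof.
  intro Hf; destruct (aut_central_generator f Hf) as [d Hd].
  destruct (is_aut_inverse f Hf) as [f' [Hf' L]].
  destruct (aut_central_generator f' Hf') as [d' Hd'].
  assert (Hone := L (0, 0, 1)).
  rewrite Hd, (aut_on_center f' d' Hf' Hd') in Hone; apply heis_eq in Hone as (_ & _ & Hdd').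
  exists d; split; [apply (Z.eq_mul_1 d d'); lia|exact (aut_on_center f d Hf Hd)].
Qed.

Lemma aut_equiv_central m m' : aut_equiv (0, 0, m) (0, 0, m') -> Z.abs m = Z.abs m'.
Proof.
  intros [f [Hf Hm]]; destruct (aut_center f Hf) as [d [Hd Hfd]].
  rewrite Hfd in Hm; apply heis_eq in Hm as (_ & _ & Hm); destruct Hd; subst; lia.
Qed.

Definition choose2 (x : Z) : Z := x * (x - 1) / 2.

Lemma double_choose2 x : 2 * choose2 x = x * (x - 1).
Proof.
  unfold choose2; destruct (Z.Even_or_Odd x) as [[m ->]|[m ->]].
  - replace (2 * m * (2 * m - 1)) with (m * (2 * m - 1) * 2) by ring.
    rewrite Z.div_mul by lia; ring.
  - replace ((2 * m + 1) * (2 * m + 1 - 1)) with (m * (2 * m + 1) * 2) by ring.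
    rewrite Z.div_mul by lia; ring.
Qed.

Lemma choose2_add x y : choose2 (x + y) = choose2 x + choose2 y + x * y.
Proof. apply (Z.mul_reg_l _ _ 2); [lia|]. rewrite !Z.mul_add_distr_l, !double_choose2; ring. Qed.

(* Induces [[p, q], [r, s]] on H/Z(H) = Z^2; the binomial corrections make it a homomorphism. *)
Definition sl2_lift (p q r s : Z) (g : Heis) : Heis :=
  let '(x, y, z) := g in
  (p * x + q * y, r * x + s * y, z + p * r * choose2 x + q * s * choose2 y + q * r * x * y).

Lemma sl2_lift_is_aut p q r s : p * s - q * r = 1 -> is_aut (sl2_lift p q r s).
Proof.
  intro Hdet; split.
  - intros [[x y] z] [[x' y'] z']; cbn; split_heis; [ring|ring|].
    rewrite !choose2_add; apply Z.sub_move_0_r.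
    transitivity ((1 + q * r - p * s) * (x * y')); [ring|].
    replace (1 + q * r - p * s) with 0 by lia; ring.
  - exists (fun '(x', y', z') =>
      let x := s * x' - q * y' in let y := - r * x' + p * y' in
      (x, y, z' - (p * r * choose2 x + q * s * choose2 y + q * r * x * y))).
    assert (Hmat : forall u v, (p * s - q * r) * u = v -> v = u) by (intros u v; rewrite Hdet; lia).
    split; intros [[x y] z]; cbn.
    + assert (Hx : s * (p * x + q * y) - q * (r * x + s * y) = x) by (apply Hmat; ring).
      assert (Hy : - r * (p * x + q * y) + p * (r * x + s * y) = y) by (apply Hmat; ring).
      rewrite Hx, Hy; split_heis; ring.
    + split_heis; [apply Hmat; ring|apply Hmat; ring|ring].
Qed.

Definition shear (u v : Z) (g : Heis) : Heis := let '(x, y, z) := g in (x, y, z + u * x + v * y).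

Lemma shear_is_aut u v : is_aut (shear u v).
Proof.
  split.
  - intros [[x y] z] [[x' y'] z']; cbn; split_heis; ring.
  - exists (shear (- u) (- v)); split; intros [[x y] z]; cbn; split_heis; ring.
Qed.

Lemma gcd_pos_le_abs_add x y : x <> 0 \/ y <> 0 -> 0 < Z.gcd x y <= Z.abs x + Z.abs y.
Proof.
  intro Hxy; pose proof (Z.gcd_nonneg x y); pose proof (Z.gcd_eq_0 x y).
  assert (Hle : forall a b, a <> 0 -> Z.gcd a b <= Z.abs a).
  { intros a b Ha; apply Z.divide_pos_le; [lia|].
    apply Z.divide_abs_r, Z.gcd_divide_l. }
  destruct Hxy as [Hx|Hy].
  - pose proof (Hle x y Hx); lia.
  - pose proof (Hle y x Hy) as Hyx; rewrite Z.gcd_comm in Hyx; lia.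
Qed.

Lemma aut_equiv_gcd_axis x y z : x <> 0 \/ y <> 0 ->
  exists z', aut_equiv (x, y, z) (Z.gcd x y, 0, z').
Proof.
  intro Hxy; pose proof (gcd_pos_le_abs_add x y Hxy) as [Hd _].
  destruct (Z.gcd_bezout x y _ eq_refl) as [u [v Huv]].
  destruct (Z.gcd_divide_l x y) as [x' Hx'], (Z.gcd_divide_r x y) as [y' Hy'].
  set (d := Z.gcd x y) in *; clearbody d; subst x y.
  assert (Hdet : u * x' + v * y' = 1) by (apply (Z.mul_reg_r _ _ d); nia).
  eexists; exists (sl2_lift u v (- y') x'); split; [apply sl2_lift_is_aut; lia|].
  cbn; split_heis; [nia|ring|reflexivity].
Qed.

Lemma aut_equiv_mod d z : 0 < d -> aut_equiv (d, 0, z) (d, 0, z mod d).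
Proof.
  intro Hd; exists (shear (- (z / d)) 0); split; [apply shear_is_aut|].
  cbn; rewrite Z.mod_eq by lia; split_heis; ring.
Qed.

Definition central_forms (n : nat) : list Heis :=
  map (fun i => (0, 0, Z.of_nat i - Z.of_nat (n * n))) (seq 0 (2 * (n * n) + 1)).

Definition noncentral_forms (n : nat) : list Heis :=
  map (fun '(d, r) => (Z.of_nat d, 0, Z.of_nat r)) (list_prod (seq 1 n) (seq 0 n)).

Definition normal_forms (n : nat) : list Heis := central_forms n ++ noncentral_forms n.

Lemma length_normal_forms n : length (normal_forms n) = (3 * (n * n) + 1)%nat.
Proof.
  unfold normal_forms, central_forms, noncentral_forms.
  rewrite length_app, !length_map, length_prod, !length_seq; lia.
Qed.

Lemma in_ball_normal_form n g : in_ball n g ->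
  exists c, In c (normal_forms n) /\ aut_equiv g c.
Proof.
  destruct g as [[x y] z]; intro Hg; destruct (in_ball_bound n x y z Hg) as [Bxy Bz].
  assert (Hxy : (x = 0 /\ y = 0) \/ (x <> 0 \/ y <> 0)) by lia.
  destruct Hxy as [[-> ->]|Hxy].
  - exists (0, 0, z); split; [|apply aut_equiv_refl].
    apply in_or_app; left; apply in_map_iff.
    exists (Z.to_nat (z + Z.of_nat (n * n))); split; [split_heis; lia|apply in_seq; lia].
  - pose proof (gcd_pos_le_abs_add x y Hxy) as Hd.
    destruct (aut_equiv_gcd_axis x y z Hxy) as [z' Hz'].
    set (d := Z.gcd x y) in *; pose proof (Z.mod_pos_bound z' d (proj1 Hd)).
    exists (d, 0, z' mod d); split.
    + apply in_or_app; right; apply in_map_iff.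
      exists (Z.to_nat d, Z.to_nat (z' mod d)); split; [split_heis; lia|].
      apply in_prod; apply in_seq; lia.
    + apply (aut_equiv_trans _ _ _ Hz'), aut_equiv_mod; lia.
Qed.

Section Transversals.

Variables (A : Type) (R : A -> A -> Prop).
Hypotheses (R_refl : forall x, R x x) (R_sym : forall x y, R x y -> R y x)
  (R_trans : forall x y z, R x y -> R y z -> R x z).

Definition separated (l : list A) : Prop :=
  forall x y, In x l -> In y l -> R x y -> x = y.

Lemma separated_nth (l : list A) (d : A) : NoDup l ->
  separated l <-> forall i j, (i < length l)%nat -> (j < length l)%nat -> i <> j ->
    ~ R (nth i l d) (nth j l d).
Proof.
  intro Hl; split.
  - intros Hsep i j Hi Hj Hij Rij; apply Hij.
    apply (proj1 (NoDup_nth l d) Hl i j Hi Hj), Hsep; auto using nth_In.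
  - intros Hnth x y Hx Hy Rxy.
    destruct (In_nth l x d Hx) as [i [Hi <-]], (In_nth l y d Hy) as [j [Hj <-]].
    destruct (Nat.eq_dec i j) as [->|Hij]; [reflexivity|].
    exfalso; exact (Hnth i j Hi Hj Hij Rxy).
Qed.

Lemma exists_transversal (P : A -> Prop) (l : list A) : exists reps,
  (forall r, In r reps -> P r) /\ NoDup reps /\ separated reps /\
  (forall x, P x -> (exists c, In c l /\ R x c) -> exists r, In r reps /\ R x r).
Proof.
  induction l as [|c l IH].
  - exists []; repeat split; try easy; apply NoDup_nil.
  - destruct IH as [reps [HP [Hnd [Hsep Hcov]]]].
    destruct (classic (exists x, P x /\ R x c /\ forall r, In r reps -> ~ R x r))
      as [[x [Px [Rxc Hx]]]|Hnone].
    + exists (x :: reps); repeat split.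
      * intros r [<-|Hr]; auto.
      * constructor; [intro Hin; exact (Hx x Hin (R_refl x))|exact Hnd].
      * intros r r' [<-|Hr] [<-|Hr'] Rrr'; auto;
          exfalso; [exact (Hx r' Hr' Rrr')|exact (Hx r Hr (R_sym _ _ Rrr'))].
      * intros y Py [c' [[<-|Hc'] Ryc']].
        -- exists x; split; [now left|eauto].
        -- destruct (Hcov y Py (ex_intro _ c' (conj Hc' Ryc'))) as [r [Hr Ryr]].
           exists r; split; [now right|exact Ryr].
    + exists reps; repeat split; auto.
      intros y Py [c' [[<-|Hc'] Ryc']]; [|eauto].
      apply NNPP; intro Hno; apply Hnone; exists y; repeat split; auto.
      intros r Hr Ryr; apply Hno; eauto.
Qed.

Lemma separated_length_le (A_eq_dec : forall x y : A, {x = y} + {x <> y}) (l1 l2 : list A) :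
  NoDup l1 -> separated l1 -> (forall x, In x l1 -> exists y, In y l2 /\ R x y) ->
  (length l1 <= length l2)%nat.
Proof.
  revert l2; induction l1 as [|a l1 IH]; intros l2 Hnd Hsep Hmap; [cbn; lia|].
  inversion Hnd as [|? ? Ha Hnd1]; subst.
  destruct (Hmap a (or_introl eq_refl)) as [y [Hy Ray]].
  assert (Hrem : (length l1 <= length (remove A_eq_dec y l2))%nat).
  { apply IH; [exact Hnd1| |].
    - intros x x' Hx Hx'; apply Hsep; now right.
    - intros x Hx; destruct (Hmap x (or_intror Hx)) as [y' [Hy' Rxy']].
      exists y'; split; [|exact Rxy'].
      apply in_in_remove; [intros ->|exact Hy'].
      assert (x = a) as -> by (apply Hsep; [now right|now left|eauto]).
      contradiction. }
  pose proof (remove_length_lt A_eq_dec l2 y Hy); cbn; lia.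
Qed.

End Transversals.

Definition heis_eq_dec (g h : Heis) : {g = h} + {g <> h}.
Proof. repeat decide equality; apply Z.eq_dec. Defined.

Definition orbit_transversal (n : nat) (reps : list Heis) : Prop :=
  (forall r, In r reps -> in_ball n r) /\ NoDup reps /\ separated Heis aut_equiv reps /\
  (forall g, in_ball n g -> exists r, In r reps /\ aut_equiv g r).

Lemma orbit_count_iff n k :
  orbit_count n k <-> exists reps, length reps = k /\ orbit_transversal n reps.
Proof.
  split.
  - intros [reps (<- & Hball & Hnd & Hnth & Hcov)].
    exists reps; repeat split; auto; now apply (separated_nth _ _ reps hone Hnd).
  - intros [reps (<- & Hball & Hnd & Hsep & Hcov)].
    exists reps; repeat split; auto; now apply (separated_nth _ _ reps hone Hnd).
Qed.

Lemma orbit_count_exists n : exists k, orbit_count n k.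
Proof.
  destruct (exists_transversal _ aut_equiv aut_equiv_refl aut_equiv_sym aut_equiv_trans
              (in_ball n) (normal_forms n)) as [reps (Hball & Hnd & Hsep & Hcov)].
  exists (length reps); apply orbit_count_iff; exists reps; repeat split; auto.
  intros g Hg; apply Hcov, in_ball_normal_form; exact Hg.
Qed.

Lemma orbit_count_upper n k : orbit_count n k -> (k <= 3 * (n * n) + 1)%nat.
Proof.
  intros [reps (<- & Hball & Hnd & Hsep & Hcov)]%orbit_count_iff.
  rewrite <- length_normal_forms.
  apply (separated_length_le _ _ aut_equiv_sym aut_equiv_trans heis_eq_dec); auto.
  intros r Hr; apply in_ball_normal_form, Hball, Hr.
Qed.

Lemma orbit_count_lower n k : orbit_count (5 * n) k -> (n * n < k)%nat.
Proof.
  intros [reps (<- & Hball & Hnd & Hsep & Hcov)]%orbit_count_iff.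
  set (centre := map (fun i => (0, 0, Z.of_nat i) : Heis) (seq 0 (n * n + 1))).
  enough (length centre <= length reps)%nat
    by (unfold centre in *; rewrite length_map, length_seq in *; lia).
  apply (separated_length_le _ _ aut_equiv_sym aut_equiv_trans heis_eq_dec).
  - apply NoDup_map_NoDup_ForallPairs; [|apply seq_NoDup].
    intros i j _ _ Hij; apply heis_eq in Hij; lia.
  - intros g g' (i & <- & _)%in_map_iff (j & <- & _)%in_map_iff Hij.
    apply aut_equiv_central in Hij; f_equal; lia.
  - intros g (i & <- & Hi)%in_map_iff; apply in_seq in Hi.
    apply Hcov, in_ball_central; lia.
Qed.

Theorem mainTheorem3 :
  (exists f : nat -> nat, is_automorphic_growth f) /\
  (forall f : nat -> nat, is_automorphic_growth f ->
     gequiv f (fun n => (n * n)%nat)).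
Proof.
  split.
  - exact (choice orbit_count orbit_count_exists).
  - intros f Hf; split.
    + exists 3%nat; split; [lia|]; intro n.
      pose proof (orbit_count_upper n (f n) (Hf n)); nia.
    + exists 5%nat; split; [lia|]; intro n.
      pose proof (orbit_count_lower (S n) _ (Hf (5 * S n)%nat)).
      replace (5 * n + 5)%nat with (5 * S n)%nat by lia; lia.
Qed.
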